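(* Let $D$ be a finite set, $k\ge 2$, and let $P:D^k\to\{0,1\}$ be a $k$-ary predicate with $P^{-1}(1)\neq\emptyset$. Suppose there exists $z\in D$ such that for all $x_1,\dots,x_{k-1}\in D$ and all permutations $\sigma$ of the $k$ coordinates, $P(\sigma(x_1,\dots,x_{k-1},z))=0$. Then for every weighted directed $k$-uniform hypergraph $H=(V,E,w)$, every $0<\varepsilon<1$, and every $\varepsilon$-$P$-sparsifier $H_\varepsilon=(V,E_\varepsilon,w_\varepsilon)$ of $H$, we have $|E_\varepsilon|=\Omega(|E|)$, with the implied constant independent of $H$ and $\varepsilon$.
   Context: $\sigma(\cdot)$ permutes the entries of a tuple. A weighted directed $k$-uniform hypergraph $H=(V,E,w)$ has $E$ a set of ordered $k$-tuples of distinct vertices and $w:E\to\mathbb{R}_{>0}$. For $A:V\to D$, $\mathrm{Val}_{H,P}(A)=\sum_{e\in E}w(e)P(A(e))$ with $A$ applied entrywise. An $\varepsilon$-$P$-sparsifier of $H$ is $H_\varepsilon=(V,E_\varepsilon,w_\varepsilon)$ with $E_\varepsilon\subseteq E$, $w_\varepsilon:E_\varepsilon\to\mathbb{R}_{>0}$, such that for every $A:V\to D$, $(1-\varepsilon)\mathrm{Val}_{H,P}(A)\le\mathrm{Val}_{H_\varepsilon,P}(A)\le(1+\varepsilon)\mathrm{Val}_{H,P}(A)$. *)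

From HB Require Import structures.
From mathcomp Require Import all_boot all_order all_fingroup all_algebra.
Set Implicit Arguments. Unset Strict Implicit. Unset Printing Implicit Defensive.
Import Order.TTheory GRing.Theory Num.Theory.
Local Open Scope ring_scope.

(* The k-tuple (x_1, ..., x_{k-1}, z), for x : 'I_(k.-1) -> D. *)
Definition snoc_tuple (D : Type) (k : nat) (x : 'I_k.-1 -> D) (z : D) : 'I_k -> D :=
  fun i => match @insub nat (fun n => n < k.-1)%N _ (val i) with
           | Some j => x j | None => z end.

Definition perm_tuple (D : Type) (k : nat) (s : 'S_k) (t : 'I_k -> D) : 'I_k -> D :=
  fun i => t (s i).

(* Directed k-uniform hyperedges: ordered k-tuples of distinct vertices. *)
Definition hyperedges_ok (V : finType) (k : nat) (E : {set {ffun 'I_k -> V}}) : Prop :=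
  forall e, e \in E -> injective e.

Definition app_edge (V D : Type) (k : nat) (A : V -> D) (e : {ffun 'I_k -> V}) : 'I_k -> D :=
  fun i => A (e i).

Definition Val (R : numDomainType) (V D : finType) (k : nat) (P : ('I_k -> D) -> bool)
  (E : {set {ffun 'I_k -> V}}) (w : {ffun 'I_k -> V} -> R) (A : V -> D) : R :=
  \sum_(e in E) w e * (P (app_edge A e))%:R.

Definition is_sparsifier (R : numDomainType) (V D : finType) (k : nat)
  (P : ('I_k -> D) -> bool) (eps : R)
  (E : {set {ffun 'I_k -> V}}) (w : {ffun 'I_k -> V} -> R)
  (Eeps : {set {ffun 'I_k -> V}}) (weps : {ffun 'I_k -> V} -> R) : Prop :=
  Eeps \subset E /\ (forall e, e \in Eeps -> 0 < weps e) /\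
  forall A : V -> D,
    (1 - eps) * Val P E w A <= Val P Eeps weps A /\
    Val P Eeps weps A <= (1 + eps) * Val P E w A.

From HB Require Import structures.
From mathcomp Require Import all_boot all_order all_fingroup all_algebra.
From Stdlib Require Import FunctionalExtensionality.
Set Implicit Arguments. Unset Strict Implicit. Unset Printing Implicit Defensive.
Import Order.TTheory GRing.Theory Num.Theory.
Local Open Scope ring_scope.

(* Fix e in E and assign to the vertices of e the values of a satisfying tuple
   of P, and z to every other vertex.  Then e is satisfied, so by the
   sparsifier inequality some e' in Eeps is satisfied too; since z blocks P in
   every position, e' only uses vertices of e, and being injective of the same
   arity it uses all of them.  So every hyperedge of E is a k-tuple over the
   vertex set of some hyperedge of Eeps, whence |E| <= k^k |Eeps|. *)

Lemma perm_snoc_tuple (D : Type) (n : nat) (u : 'I_n.+1 -> D) (z : D) (i : 'I_n.+1) :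
  u i = z -> exists (x : 'I_n -> D) (s : 'S_n.+1),
    u = perm_tuple s (@snoc_tuple D n.+1 x z).
Proof.
move=> ui_z; pose s : 'S_n.+1 := tperm i ord_max.
exists (fun j => u (s (widen_ord (leqnSn n) j))), s.
apply: functional_extensionality => j; rewrite /perm_tuple /snoc_tuple /=.
case: insubP => [m _ val_m | /negbTE j_max].
  have -> : widen_ord (leqnSn n) m = s j by apply: val_inj.
  by rewrite tpermK.
have /eqP sj_max : s j == ord_max.
  by rewrite -val_eqE /= eqn_leq -ltnS ltn_ord leqNgt j_max.
by rewrite -[j](tpermK i ord_max) -/s sj_max tpermR ui_z.
Qed.

Lemma blocked_tuple (D : Type) (n : nat) (P : ('I_n.+1 -> D) -> bool) (z : D) :
  (forall (x : 'I_n -> D) (s : 'S_n.+1),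
     P (perm_tuple s (@snoc_tuple D n.+1 x z)) = false) ->
  forall (u : 'I_n.+1 -> D) (i : 'I_n.+1), u i = z -> P u = false.
Proof. by move=> Pz u i /(@perm_snoc_tuple D n u z i)[x [s ->]]. Qed.

Definition extend_tuple (V D : finType) (k : nat) (e : {ffun 'I_k -> V})
  (t : 'I_k -> D) (z : D) (v : V) : D :=
  if [pick i | e i == v] is Some i then t i else z.

Lemma app_edge_extend_tuple (V D : finType) (k : nat) (e : {ffun 'I_k -> V})
  (t : 'I_k -> D) (z : D) :
  injective e -> app_edge (extend_tuple e t z) e = t.
Proof.
move=> inj_e; apply: functional_extensionality => i.
rewrite /app_edge /extend_tuple; case: pickP => [j /eqP /inj_e -> // | /(_ i)].
by rewrite eqxx.
Qed.

Lemma extend_tuple_notin (V D : finType) (k : nat) (e : {ffun 'I_k -> V})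
  (t : 'I_k -> D) (z : D) (v : V) :
  v \notin codom e -> extend_tuple e t z v = z.
Proof.
rewrite /extend_tuple; case: pickP => // j /eqP <-.
by rewrite codom_f.
Qed.

Section Val.

Variables (R : numDomainType) (V D : finType) (k : nat) (P : ('I_k -> D) -> bool).
Variables (E : {set {ffun 'I_k -> V}}) (w : {ffun 'I_k -> V} -> R) (A : V -> D).

Lemma Val_gt0 (e : {ffun 'I_k -> V}) :
  (forall e, e \in E -> 0 < w e) -> e \in E -> P (app_edge A e) ->
  0 < Val P E w A.
Proof.
move=> w_gt0 eE Pe; rewrite /Val (bigD1 e) //= Pe mulr1 ltr_wpDr ?w_gt0 //.
by apply: sumr_ge0 => f /andP[fE _]; rewrite mulr_ge0 ?ler0n ?(ltW (w_gt0 f fE)).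
Qed.

Lemma Val_gt0_witness :
  0 < Val P E w A -> exists2 e, e \in E & P (app_edge A e).
Proof.
move=> Val_gt0; apply/exists_inP; apply: contraTT Val_gt0 => /exists_inPn unsat.
by rewrite /Val big1 ?ltxx // => e /unsat /negbTE ->; rewrite mulr0.
Qed.

End Val.

Lemma sparsifier_witness (R : numDomainType) (V D : finType) (k : nat)
  (P : ('I_k -> D) -> bool) (eps : R)
  (E : {set {ffun 'I_k -> V}}) (w : {ffun 'I_k -> V} -> R)
  (Eeps : {set {ffun 'I_k -> V}}) (weps : {ffun 'I_k -> V} -> R) (A : V -> D) :
  eps < 1 -> is_sparsifier P eps E w Eeps weps -> 0 < Val P E w A ->
  exists2 e, e \in Eeps & P (app_edge A e).
Proof.
move=> eps_lt1 [_ [_ /(_ A)[lowerA _]]] Val_gt0; apply: Val_gt0_witness.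
by apply: lt_le_trans lowerA; rewrite mulr_gt0 ?subr_gt0.
Qed.

Lemma sparsifier_codom_cover (R : numDomainType) (V D : finType) (n : nat)
  (P : ('I_n.+1 -> D) -> bool) (z : D) (eps : R)
  (E : {set {ffun 'I_n.+1 -> V}}) (w : {ffun 'I_n.+1 -> V} -> R)
  (Eeps : {set {ffun 'I_n.+1 -> V}}) (weps : {ffun 'I_n.+1 -> V} -> R) :
  (exists t, P t) ->
  (forall (x : 'I_n -> D) (s : 'S_n.+1),
     P (perm_tuple s (@snoc_tuple D n.+1 x z)) = false) ->
  hyperedges_ok E -> (forall e, e \in E -> 0 < w e) -> eps < 1 ->
  is_sparsifier P eps E w Eeps weps ->
  forall e, e \in E -> exists2 f, f \in Eeps & {subset codom e <= codom f}.
Proof.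
move=> [t Pt] Pz inj_E w_gt0 eps_lt1 spE e eE.
pose A := extend_tuple e t z.
have Ae : app_edge A e = t by apply: app_edge_extend_tuple; apply: inj_E.
have [|f fEeps Pf] := sparsifier_witness eps_lt1 spE (A := A).
  by apply: (Val_gt0 w_gt0 eE); rewrite Ae.
exists f => //.
have f_in_e : codom f \subset codom e.
  apply/subsetP => _ /codomP[i ->]; apply: contraTT Pf => fi_notin.
  by rewrite (@blocked_tuple _ _ _ _ Pz _ i) // /app_edge /A extend_tuple_notin.
have inj_f : injective f by apply: inj_E; apply: (subsetP spE.1).
have /subset_cardP/(_ f_in_e) eq_codom : #|codom f| = #|codom e|.
  by rewrite !card_codom //; apply: inj_E.
by move=> v; rewrite eq_codom.
Qed.

Lemma card_le_codom_cover (aT V : finType) (E F : {set {ffun aT -> V}}) :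
  (forall e, e \in E -> exists2 f, f \in F & {subset codom e <= codom f}) ->
  (#|E| <= #|F| * #|aT| ^ #|aT|)%N.
Proof.
move=> coverE.
pose on_codom (f : {ffun aT -> V}) := [set e : {ffun aT -> V} in ffun_on (codom f)].
pose C := on_codom @: F.
have sub_EC : E \subset cover C.
  apply/subsetP => e /coverE[f fF sub_ef]; apply/bigcupP.
  exists (on_codom f); first exact: imset_f.
  by rewrite inE; apply/ffun_onP => i; apply/sub_ef/codom_f.
apply: leq_trans (subset_leq_card sub_EC) _.
apply: leq_trans (leq_card_cover C).1 _.
apply: (@leq_trans (\sum_(B in C) #|aT| ^ #|aT|)).
  apply: leq_sum => _ /imsetP[f _ ->]; rewrite cardsE card_ffun_on.
  have : (#|codom f| <= #|aT|)%N by rewrite -(size_codom f) card_size.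
  by case: #|aT| => // m; rewrite leq_exp2r.
by rewrite sum_nat_const leq_mul2r leq_imset_card orbT.
Qed.

Theorem proposition17 (R : realFieldType) (D : finType) (k : nat)
  (P : ('I_k -> D) -> bool) :
  (2 <= k)%N ->
  (exists t : 'I_k -> D, P t) ->
  (exists z : D, forall (x : 'I_k.-1 -> D) (s : 'S_k),
      P (perm_tuple s (snoc_tuple x z)) = false) ->
  exists c : R, 0 < c /\
    forall (V : finType) (E : {set {ffun 'I_k -> V}}) (w : {ffun 'I_k -> V} -> R)
           (eps : R) (Eeps : {set {ffun 'I_k -> V}}) (weps : {ffun 'I_k -> V} -> R),
      hyperedges_ok E ->
      (forall e, e \in E -> 0 < w e) ->
      0 < eps < 1 ->
      is_sparsifier P eps E w Eeps weps ->
      c * (#|E|%:R) <= (#|Eeps|%:R).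
Proof.
case: k P => [|n] // P _ satP [z Pz].
have kk_gt0 : (0 < n.+1 ^ n.+1)%N by rewrite expn_gt0.
exists (n.+1 ^ n.+1)%:R^-1; split; first by rewrite invr_gt0 ltr0n.
move=> V E w eps Eeps weps inj_E w_gt0 /andP[_ eps_lt1] spE.
have := card_le_codom_cover
  (sparsifier_codom_cover satP Pz inj_E w_gt0 eps_lt1 spE).
rewrite card_ord -(ler_nat R) natrM => le_E.
by rewrite mulrC ler_pdivrMr ?ltr0n.
Qed.
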